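(* Let $N$ be a positive odd integer and $\alpha,\beta$ real; put $\sigma=\alpha+\beta$. Define the rational functions $$E_1(x)=\frac{(x+\sigma+3)(x+\alpha-\beta+1)(x-\sigma-2N+1)}{4(x+1)(x+3)},\qquad E_2(x)=-\frac{(x-\sigma-1)(x+\beta-\alpha-3)(x+\sigma+2N+1)}{4(x-1)(x-3)},$$ $$G_1(x)=\frac{\sigma(\sigma+2+2N)(x+1+\alpha-\beta)}{(1-x^2)(x+3)},\qquad G_2(x)=\frac{(\alpha-\beta)(x-\sigma-1)(x+\sigma+2N+1)}{(1-x^2)(x-3)},$$ and the operator $$(Hf)(x)=E_1(x)\big(f(x+4)-f(x)\big)+E_2(x)\big(f(x-4)-f(x)\big)+G_1(x)\big(f(-x-2)-f(x)\big)+G_2(x)\big(f(-x+2)-f(x)\big).$$ Then for every $n\in\{0,1,\dots,N\}$ the monic dual $-1$ Hahn polynomial $P_n$ satisfies $(HP_n)(x)=2n\,P_n(x)$ for all $x\notin\{\pm1,\pm3\}$ (in particular $HP_n$ is a polynomial of degree $n$).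
   Context: For $N$ odd: $b_n^{(-1)}=-1-\alpha+\beta$ for $n$ even, $b_n^{(-1)}=-1+\alpha-\beta$ for $n$ odd; $u_n^{(-1)}=4n(N+1-n)$ for $n$ even, $u_n^{(-1)}=4(\alpha+n)(\beta+N+1-n)$ for $n$ odd. The monic dual $-1$ Hahn polynomials are defined by $P_{-1}=0$, $P_0=1$, $P_{n+1}(x)=(x-b_n^{(-1)})P_n(x)-u_n^{(-1)}P_{n-1}(x)$ for $n\ge0$. *)

From Stdlib Require Import Reals Lra Lia.
Open Scope R_scope.

(* Recurrence coefficients of the monic dual -1 Hahn polynomials, N odd. *)
Definition bcoef (a b : R) (n : nat) : R :=
  if Nat.even n then -1 - a + b else -1 + a - b.

Definition ucoef (N : nat) (a b : R) (n : nat) : R :=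
  if Nat.even n then 4 * INR n * (INR N + 1 - INR n)
  else 4 * (a + INR n) * (b + INR N + 1 - INR n).

(* Ppair N a b n x = (P_{n-1}(x), P_n(x)), with P_{-1} = 0, P_0 = 1,
   P_{n+1} = (x - b_n) P_n - u_n P_{n-1}. *)
Fixpoint Ppair (N : nat) (a b : R) (n : nat) (x : R) : R * R :=
  match n with
  | O => (0, 1)
  | S m => let (p, q) := Ppair N a b m x in
           (q, (x - bcoef a b m) * q - ucoef N a b m * p)
  end.

Definition dHahnP (N : nat) (a b : R) (n : nat) (x : R) : R :=
  snd (Ppair N a b n x).

Definition E1 (N : nat) (a b x : R) : R :=
  let s := a + b in
  (x + s + 3) * (x + a - b + 1) * (x - s - 2 * INR N + 1) / (4 * (x + 1) * (x + 3)).

Definition E2 (N : nat) (a b x : R) : R :=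
  let s := a + b in
  - ((x - s - 1) * (x + b - a - 3) * (x + s + 2 * INR N + 1) / (4 * (x - 1) * (x - 3))).

Definition G1 (N : nat) (a b x : R) : R :=
  let s := a + b in
  s * (s + 2 + 2 * INR N) * (x + 1 + a - b) / ((1 - x ^ 2) * (x + 3)).

Definition G2 (N : nat) (a b x : R) : R :=
  let s := a + b in
  (a - b) * (x - s - 1) * (x + s + 2 * INR N + 1) / ((1 - x ^ 2) * (x - 3)).

Definition Hop (N : nat) (a b : R) (f : R -> R) (x : R) : R :=
  E1 N a b x * (f (x + 4) - f x) + E2 N a b x * (f (x - 4) - f x)
  + G1 N a b x * (f (- x - 2) - f x) + G2 N a b x * (f (- x + 2) - f x).

From Pilot Require Import Defs.
From Stdlib Require Import Reals Lra.
Open Scope R_scope.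

(* Write P_n for the monic dual -1 Hahn polynomials, Q_n = P_{n-1},
   H for the operator Hop, C f = H (t f) - x H f for its commutator with
   multiplication by x, and C2 f = C (t f) - x C f for the double commutator.
   1. Product rules: H and C of (t - c) f - k g are expressed through H f, C f,
      C2 f, H g and C g; this is pure bookkeeping since H is linear.
   2. Structure of the polynomials under the reflection t -> -t - 2: for n even
      P_n is invariant and Q_n is (t + 1 + a - b) times an invariant function; for
      n odd the roles are exchanged.
   3. On invariant functions and on such "twisted" functions, C2 is an explicit
      combination of C, H and the identity (a rational-function identity).
   4. By a two-step induction along the three-term recurrence, H P_n = 2 n P_n and
      C P_n = 2 P_{n+1} - 2 u_n P_{n-1} hold simultaneously for every n.
   The theorem is the first half of step 4. *)

Definition Hcomm (N : nat) (a b : R) (f : R -> R) (x : R) : R :=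
  Hop N a b (fun t => t * f t) x - x * Hop N a b f x.

Definition Hcomm2 (N : nat) (a b : R) (f : R -> R) (x : R) : R :=
  Hcomm N a b (fun t => t * f t) x - x * Hcomm N a b f x.

Lemma Hop_recurrence N a b (f g h : R -> R) (c k x : R) :
  (forall t, h t = (t - c) * f t - k * g t) ->
  Hop N a b h x = (x - c) * Hop N a b f x + Hcomm N a b f x - k * Hop N a b g x.
Proof. intros Hh; unfold Hcomm, Hop; rewrite !Hh; ring. Qed.

Lemma Hcomm_recurrence N a b (f g h : R -> R) (c k x : R) :
  (forall t, h t = (t - c) * f t - k * g t) ->
  Hcomm N a b h x = (x - c) * Hcomm N a b f x + Hcomm2 N a b f x - k * Hcomm N a b g x.
Proof. intros Hh; unfold Hcomm2, Hcomm, Hop; rewrite !Hh; ring. Qed.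

Definition reflection_invariant (f : R -> R) : Prop :=
  forall t, f (- t - 2) = f t.

Definition twisted (a b : R) (f : R -> R) : Prop :=
  exists g, reflection_invariant g /\ forall t, f t = (t + 1 + a - b) * g t.

Definition dHahnPrev (N : nat) (a b : R) (n : nat) (t : R) : R :=
  fst (Ppair N a b n t).

Lemma dHahnP_S N a b n t :
  dHahnP N a b (S n) t =
  (t - bcoef a b n) * dHahnP N a b n t - ucoef N a b n * dHahnPrev N a b n t.
Proof. unfold dHahnP, dHahnPrev; simpl; destruct (Ppair N a b n t); reflexivity. Qed.

Lemma dHahnPrev_S N a b n t : dHahnPrev N a b (S n) t = dHahnP N a b n t.
Proof. unfold dHahnP, dHahnPrev; simpl; destruct (Ppair N a b n t); reflexivity. Qed.

Lemma even_S n : Nat.even (S n) = negb (Nat.even n).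
Proof. rewrite Nat.even_succ, <- Nat.negb_even; reflexivity. Qed.

(* Reflection structure of the pair (P_{n-1}, P_n): the recurrence coefficient
   b_n makes t - b_n equal to t + 1 + a - b for n even, which preserves it. *)
Lemma dHahnP_parity N a b n :
  if Nat.even n
  then reflection_invariant (dHahnP N a b n) /\ twisted a b (dHahnPrev N a b n)
  else reflection_invariant (dHahnPrev N a b n) /\ twisted a b (dHahnP N a b n).
Proof.
  induction n as [|n IH].
  - split; [intros t; reflexivity|].
    exists (fun _ => 0); split; [intros t; reflexivity|intros t; unfold dHahnPrev; simpl; ring].
  - rewrite even_S; destruct (Nat.even n) eqn:En; simpl.
    + destruct IH as (HP & g & Hg & HQ); split.
      * intros t; rewrite !dHahnPrev_S; apply HP.
      * exists (fun t => dHahnP N a b n t - ucoef N a b n * g t); split.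
        -- intros t; rewrite HP, Hg; reflexivity.
        -- intros t; rewrite dHahnP_S, HQ; unfold bcoef; rewrite En; ring.
    + destruct IH as (HQ & g & Hg & HP); split.
      * intros t; rewrite !dHahnP_S, !HP, HQ, Hg; unfold bcoef; rewrite En; ring.
      * exists g; split; [exact Hg|].
        intros t; rewrite dHahnPrev_S; apply HP.
Qed.

Definition ladder (N : nat) (a b x : R) (n : nat) : Prop :=
  Hop N a b (dHahnP N a b n) x = 2 * INR n * dHahnP N a b n x /\
  Hcomm N a b (dHahnP N a b n) x =
  2 * dHahnP N a b (S n) x - 2 * ucoef N a b n * dHahnPrev N a b n x.

Section AwayFromPoles.

Variables (N : nat) (a b x : R).
Hypotheses (hx1 : x <> 1) (hxm1 : x <> -1) (hx3 : x <> 3) (hxm3 : x <> -3).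

Lemma denominators_nonzero :
  x + 1 <> 0 /\ x + 3 <> 0 /\ x - 1 <> 0 /\ x - 3 <> 0 /\ 1 - x ^ 2 <> 0.
Proof.
  repeat split; try lra.
  replace (1 - x ^ 2) with ((1 - x) * (1 + x)) by ring.
  apply Rmult_integral_contrapositive; split; lra.
Qed.

(* Double commutator on reflection invariant functions: only the values
   f (x + 4), f (x - 4) and f x survive, and they satisfy a fixed relation. *)
Lemma Hcomm2_invariant (f : R -> R) :
  reflection_invariant f ->
  Hcomm2 N a b f x + 2 * (a - b) * Hcomm N a b f x
  + 16 * (a + 1) * (b + INR N) * f x + 8 * (b - a - 2) * Hop N a b f x = 0.
Proof.
  intros Hf; destruct denominators_nonzero as (d1 & d3 & d1' & d3' & d2).
  unfold Hcomm2, Hcomm, Hop, Defs.E1, E2, G1, G2; cbv beta.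
  rewrite Hf; replace (- x + 2) with (- (x - 4) - 2) by ring; rewrite Hf.
  field; repeat split; assumption.
Qed.

Lemma Hcomm2_twisted (f : R -> R) :
  twisted a b f ->
  Hcomm2 N a b f x - 2 * (a - b) * Hcomm N a b f x
  + 16 * (INR N - a * (b + INR N + 1)) * f x + 8 * (a - b - 2) * Hop N a b f x = 0.
Proof.
  intros (g & Hg & Hf); destruct denominators_nonzero as (d1 & d3 & d1' & d3' & d2).
  unfold Hcomm2, Hcomm, Hop, Defs.E1, E2, G1, G2; cbv beta; rewrite !Hf.
  rewrite Hg; replace (- x + 2) with (- (x - 4) - 2) by ring; rewrite Hg.
  field; repeat split; assumption.
Qed.

Lemma Hcomm2_dHahnP (n : nat) :
  Hcomm2 N a b (dHahnP N a b n) x =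
  if Nat.even n
  then - 2 * (a - b) * Hcomm N a b (dHahnP N a b n) x
       - 16 * (a + 1) * (b + INR N) * dHahnP N a b n x
       - 8 * (b - a - 2) * Hop N a b (dHahnP N a b n) x
  else 2 * (a - b) * Hcomm N a b (dHahnP N a b n) x
       - 16 * (INR N - a * (b + INR N + 1)) * dHahnP N a b n x
       - 8 * (a - b - 2) * Hop N a b (dHahnP N a b n) x.
Proof.
  pose proof (dHahnP_parity N a b n) as Hpar.
  destruct (Nat.even n).
  - pose proof (Hcomm2_invariant _ (proj1 Hpar)); lra.
  - pose proof (Hcomm2_twisted _ (proj2 Hpar)); lra.
Qed.

Lemma ladder_base : ladder N a b x 0 /\ ladder N a b x 1.
Proof.
  destruct denominators_nonzero as (d1 & d3 & d1' & d3' & d2).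
  unfold ladder, Hcomm, Hop, dHahnP, dHahnPrev, Defs.E1, E2, G1, G2.
  cbn [Ppair fst snd]; unfold bcoef, ucoef; cbn [Nat.even INR].
  repeat split; field; repeat split; assumption.
Qed.

Lemma ladder_step (n : nat) :
  ladder N a b x n -> ladder N a b x (S n) -> ladder N a b x (S (S n)).
Proof.
  intros [HP0 CP0] [HP1 CP1].
  assert (Hrec : forall t, dHahnP N a b (S (S n)) t =
    (t - bcoef a b (S n)) * dHahnP N a b (S n) t - ucoef N a b (S n) * dHahnP N a b n t).
  { intros t; rewrite dHahnP_S, dHahnPrev_S; reflexivity. }
  split.
  - rewrite (Hop_recurrence _ _ _ _ _ _ _ _ x Hrec), HP1, CP1, HP0, dHahnPrev_S, Hrec.
    rewrite !S_INR; ring.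
  - rewrite (Hcomm_recurrence _ _ _ _ _ _ _ _ x Hrec), Hcomm2_dHahnP.
    rewrite HP1, CP1, CP0, dHahnPrev_S, (dHahnP_S _ _ _ (S (S n))), dHahnPrev_S, Hrec,
      (dHahnP_S _ _ _ n).
    unfold bcoef, ucoef; rewrite !even_S, !S_INR.
    destruct (Nat.even n); simpl; ring.
Qed.

Lemma ladder_all (n : nat) : ladder N a b x n.
Proof.
  assert (Hpair : ladder N a b x n /\ ladder N a b x (S n)).
  { induction n as [|n [IH0 IH1]].
    - exact ladder_base.
    - split; [exact IH1 | exact (ladder_step n IH0 IH1)]. }
  exact (proj1 Hpair).
Qed.

End AwayFromPoles.

Theorem mainTheorem8 (N : nat) (a b : R) (n : nat) (x : R) :
  Nat.odd N = true -> (n <= N)%nat ->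
  x <> 1 -> x <> -1 -> x <> 3 -> x <> -3 ->
  Hop N a b (dHahnP N a b n) x = 2 * INR n * dHahnP N a b n x.
Proof.
  intros _ _ h1 h2 h3 h4.
  exact (proj1 (ladder_all N a b x h1 h2 h3 h4 n)).
Qed.
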